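(* Let $(\mathbb{K},\partial)$ be a differential field with field of constants $C$ (algebraically closed, characteristic zero), let $L\in\mathbb{K}[\partial]$ be of order $n$ in normal form, and let $\mathcal{G}=\{G_0=1,G_1,\ldots,G_{t-1}\}$ be a Goodearl basis of $\mathcal{C}(L)$ as a $C[L]$-module. Assign weights $w(\lambda)=n$, $w(\mu_i)=\mathrm{ord}(G_i)$, and to a monomial $\lambda^k\mu_1^{\alpha_1}\cdots\mu_{t-1}^{\alpha_{t-1}}$ the weight $kn+\sum_i\alpha_i\mathrm{ord}(G_i)$. Then for every positive integer $W$ there is at most one monomial in $\lambda,\mu_1,\ldots,\mu_{t-1}$ that is linear in $\mu_1,\ldots,\mu_{t-1}$ (i.e. of the form $\lambda^k$ or $\lambda^k\mu_i$) and has weight $W$.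
   Context: $\mathcal{C}(L)=\{A\in\mathbb{K}[\partial]:LA=AL\}$. A Goodearl basis is a $C[L]$-module basis $\{G_0=1,\ldots,G_{t-1}\}$ of $\mathcal{C}(L)$ in which each $G_k$ has minimal order among $Q\in\mathcal{C}(L)$ with $\mathrm{ord}(Q)\equiv\mathrm{ord}(G_k)\pmod n$, and the classes $\mathrm{ord}(G_k)\bmod n$ are pairwise distinct and exhaust the classes mod $n$ of orders of elements of $\mathcal{C}(L)$. The weight of a monomial $M$ equals $\mathrm{ord}(\phi_L(M))$ where $\phi_L(\lambda)=L$, $\phi_L(\mu_i)=G_i$. *)

From HB Require Import structures.
From mathcomp Require Import all_boot all_order all_algebra.
Set Implicit Arguments. Unset Strict Implicit. Unset Printing Implicit Defensive.
Import GRing.Theory.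
Local Open Scope ring_scope.

Definition is_derivation (K : fieldType) (d : K -> K) : Prop :=
  (forall a b : K, d (a + b) = d a + d b) /\
  (forall a b : K, d (a * b) = d a * b + a * d b).

Definition is_const (K : fieldType) (d : K -> K) (c : K) : Prop := d c = 0.

Definition consts_alg_closed (K : fieldType) (d : K -> K) : Prop :=
  forall p : {poly K}, (forall i, is_const d p`_i) -> (1 < size p)%N ->
    exists x : K, is_const d x /\ root p x.

(* Differential operators  A = \sum_i a_i \partial^i  in K[\partial] are
   represented by their coefficient polynomial \sum_i a_i X^i.
   The (noncommutative) product is given by the Leibniz rule
   (a \partial^i)(b \partial^j) = \sum_k C(i,k) a b^(k) \partial^(i+j-k). *)
Definition opmul (K : fieldType) (d : K -> K) (P Q : {poly K}) : {poly K} :=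
  \sum_(i < size P) \sum_(j < size Q) \sum_(k < i.+1)
     (P`_i * 'C(i, k)%:R * iter k d Q`_j) *: 'X^(i + j - k).

Definition ord (K : fieldType) (A : {poly K}) : nat := (size A).-1.

Definition normal_form (K : fieldType) (L : {poly K}) (n : nat) : Prop :=
  size L = n.+1 /\ L`_n = 1 /\ L`_n.-1 = 0.

Definition in_centralizer (K : fieldType) (d : K -> K) (L A : {poly K}) : Prop :=
  opmul d L A = opmul d A L.

Fixpoint oppow (K : fieldType) (d : K -> K) (L : {poly K}) (k : nat) : {poly K} :=
  if k is k'.+1 then opmul d L (oppow d L k') else 1.

Definition op_eval (K : fieldType) (d : K -> K) (p L : {poly K}) : {poly K} :=
  \sum_(k < size p) opmul d (p`_k)%:P (oppow d L k).

Definition const_poly (K : fieldType) (d : K -> K) (p : {poly K}) : Prop :=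
  forall i, is_const d p`_i.

Definition CL_basis (K : fieldType) (d : K -> K) (L : {poly K}) (t : nat)
    (G : 'I_t -> {poly K}) : Prop :=
  (forall i, in_centralizer d L (G i)) /\
  (forall A, in_centralizer d L A ->
     exists p : 'I_t -> {poly K}, (forall i, const_poly d (p i)) /\
       A = \sum_i opmul d (op_eval d (p i) L) (G i)) /\
  (forall p : 'I_t -> {poly K}, (forall i, const_poly d (p i)) ->
       \sum_i opmul d (op_eval d (p i) L) (G i) = 0 -> forall i, p i = 0).

Definition goodearl_basis (K : fieldType) (d : K -> K) (L : {poly K}) (n t : nat)
    (G : 'I_t -> {poly K}) : Prop :=
  [/\ (forall i : 'I_t, val i = 0%N -> G i = 1),
      CL_basis d L G,
      (forall (i : 'I_t) (Q : {poly K}), in_centralizer d L Q -> Q != 0 ->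
          ord Q = ord (G i) %[mod n] -> (ord (G i) <= ord Q)%N),
      (forall i j : 'I_t, ord (G i) = ord (G j) %[mod n] -> i = j) &
      (forall Q : {poly K}, in_centralizer d L Q -> Q != 0 ->
          exists i : 'I_t, ord Q = ord (G i) %[mod n])].

(* Monomials linear in mu_1..mu_{t-1}: lambda^k (None) or lambda^k mu_i (Some i, i <> 0). *)
Definition lin_monomial (t : nat) := (nat * option 'I_t)%type.

Definition valid_lin_monomial (t : nat) (m : lin_monomial t) : Prop :=
  if m.2 is Some i then val i <> 0%N else True.

Definition lin_weight (K : fieldType) (n t : nat) (G : 'I_t -> {poly K})
    (m : lin_monomial t) : nat :=
  (m.1 * n + (if m.2 is Some i then ord (G i) else 0))%N.

From HB Require Import structures.
From mathcomp Require Import all_boot all_order all_algebra.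
Set Implicit Arguments. Unset Strict Implicit. Unset Printing Implicit Defensive.
Import GRing.Theory.
Local Open Scope ring_scope.

(* Weights of linear monomials are [k n + ord(G_i)] (with [ord G_0 = 0] for
   [lambda^k]); reducing mod [n] recovers the class of [ord G_i], which by the
   Goodearl property determines [i], and then cancelling [ord G_i] recovers [k]. *)

Lemma eqn_mulDl_mod (n a b c e : nat) :
  (a * n + c = b * n + e)%N -> c = e %[mod n].
Proof. by move=> eq_w; rewrite -(modnMDl a c) eq_w modnMDl. Qed.

Lemma mulDl_inj_mod (n : nat) (T : Type) (P : T -> Prop) (w : T -> nat) :
  (0 < n)%N ->
  (forall x y, P x -> P y -> w x = w y %[mod n] -> x = y) ->
  forall (a b : nat) (x y : T), P x -> P y ->
    (a * n + w x = b * n + w y)%N -> (a, x) = (b, y).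
Proof.
move=> n_gt0 w_inj a b x y Px Py eq_w.
have eq_xy := w_inj x y Px Py (eqn_mulDl_mod eq_w); subst y.
by move/addIn/eqP: eq_w; rewrite eqn_pmul2r // => /eqP ->.
Qed.

Section GoodearlOrders.

Variables (K : fieldType) (n t : nat) (G : 'I_t -> {poly K}).
Hypothesis G0 : forall i : 'I_t, val i = 0%N -> G i = 1.
Hypothesis ord_G_inj_mod :
  forall i j : 'I_t, ord (G i) = ord (G j) %[mod n] -> i = j.

Definition lin_factor_ord (o : option 'I_t) : nat :=
  if o is Some i then ord (G i) else 0%N.

Definition valid_lin_factor (o : option 'I_t) : Prop :=
  if o is Some i then val i <> 0%N else True.

Lemma ord_G_nonzero_mod (i : 'I_t) :
  val i <> 0%N -> ord (G i) <> 0%N %[mod n].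
Proof.
move=> i_neq0 ord_Gi0; apply: i_neq0.
have t_gt0 : (0 < t)%N := leq_ltn_trans (leq0n i) (ltn_ord i).
have ord_G0 : ord (G (Ordinal t_gt0)) = 0%N by rewrite G0 // /ord size_poly1.
have eq_mod : ord (G i) = ord (G (Ordinal t_gt0)) %[mod n] by rewrite ord_Gi0 ord_G0.
by rewrite (ord_G_inj_mod eq_mod).
Qed.

Lemma lin_factor_ord_inj_mod (o1 o2 : option 'I_t) :
  valid_lin_factor o1 -> valid_lin_factor o2 ->
  lin_factor_ord o1 = lin_factor_ord o2 %[mod n] -> o1 = o2.
Proof.
case: o1 o2 => [i|] [j|] //= vi vj eq_ord.
- by rewrite (ord_G_inj_mod eq_ord).
- by case: (ord_G_nonzero_mod vi).
- by case: (ord_G_nonzero_mod vj).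
Qed.

End GoodearlOrders.

Theorem lemma6p2 (K : fieldType) (d : K -> K) (L : {poly K}) (n t : nat)
    (G : 'I_t -> {poly K}) :
  is_derivation d ->
  [pchar K] =i pred0 ->
  consts_alg_closed d ->
  (0 < n)%N ->
  normal_form L n ->
  (0 < t)%N ->
  goodearl_basis d L n G ->
  forall W : nat, (0 < W)%N ->
  forall m1 m2 : lin_monomial t,
    valid_lin_monomial m1 -> valid_lin_monomial m2 ->
    lin_weight n G m1 = W -> lin_weight n G m2 = W -> m1 = m2.
Proof.
move=> _ _ _ n_gt0 _ _ [G0 _ _ ord_G_inj_mod _] W _ [k1 o1] [k2 o2] v1 v2 w1 w2.
apply: (mulDl_inj_mod n_gt0 (lin_factor_ord_inj_mod G0 ord_G_inj_mod)) => //.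
by rewrite -[LHS]/(lin_weight n G (k1, o1)) w1 -w2.
Qed.
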